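(* Let $\mathit{VI}$ be a finite set of variables with $\#\mathit{VI}=n$. For all $j,k\in\mathbb{N}$ with $1\le j<k\le n$, we have $\mathit{TSD}_j\subsetneq \mathit{TSD}_k$ (strict inclusion).
   Context: $\mathit{SG}=\wp(\mathit{VI})\setminus\{\emptyset\}$ (the set of sharing groups) and $\mathit{SH}=\wp(\mathit{SG})$, ordered by set inclusion. For $1\le k\le n$, the map $\rho_{\mathit{TSD}_k}:\mathit{SH}\to\mathit{SH}$ is $\rho_{\mathit{TSD}_k}(sh)=\{\,S\in\mathit{SG}\mid \forall T\subseteq S:\ \#T<k\implies S=\bigcup\{U\in sh\mid T\subseteq U\subseteq S\}\,\}$; it is an upper closure operator on $\mathit{SH}$, and $\mathit{TSD}_k=\rho_{\mathit{TSD}_k}(\mathit{SH})$ is its image (set of fixpoints). *)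

From mathcomp Require Import all_boot all_order.
Set Implicit Arguments. Unset Strict Implicit. Unset Printing Implicit Defensive.

Section TSD.
Variable VI : finType.

Definition SG : {set {set VI}} := [set S : {set VI} | S != set0].

Definition SH : {set {set {set VI}}} := powerset SG.

Definition rho_TSD (k : nat) (sh : {set {set VI}}) : {set {set VI}} :=
  [set S in SG | [forall T : {set VI}, (T \subset S) && (#|T| < k) ==>
      (S == \bigcup_(U in sh | (T \subset U) && (U \subset S)) U)]].

Definition TSD (k : nat) : {set {set {set VI}}} :=
  [set rho_TSD k sh | sh in SH].

End TSD.

(* rho_k is extensive on SH, idempotent, and antitone in k, so TSD_k is its set
   of fixpoints and every fixpoint of rho_j is a fixpoint of rho_k when j <= k.
   For strictness take S with #S = k and X = SG \ {S}: the proper subset S \ x,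
   of size k - 1, is not covered by members of X lying under S, so X is
   rho_k-closed; yet any T of size < j < k is covered inside S by the sets
   x |: T, which lie in X, so S is in rho_j(X) and X is not rho_j-closed. *)
From mathcomp Require Import all_boot all_order.

Set Implicit Arguments.
Unset Strict Implicit.
Unset Printing Implicit Defensive.

Section Closure.
Variable VI : finType.
Implicit Types (S T U : {set VI}) (sh X : {set {set VI}}).

Lemma rho_TSDP k sh S :
  reflect (S != set0 /\ forall T x, T \subset S -> #|T| < k -> x \in S ->
             exists2 U, [&& U \in sh, T \subset U & U \subset S] & x \in U)
          (S \in rho_TSD k sh).
Proof.
rewrite inE [S \in SG VI]inE; apply: (iffP andP) => -[S0 covS]; split=> //.
  move=> T x TS Tk xS; have /implyP/(_ _)/eqP covT := forallP covS T.
  by move: xS; rewrite {1}covT ?TS // => /bigcupP[U]; exists U.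
apply/forallP => T; apply/implyP => /andP[TS Tk].
rewrite eqEsubset; apply/andP; split; last first.
  by apply/bigcupsP => U /and3P[].
by apply/subsetP => x /(covS T x TS Tk)[U UP xU]; apply/bigcupP; exists U.
Qed.

Lemma rho_TSD_subSG k sh : rho_TSD k sh \subset SG VI.
Proof. by apply/subsetP => S /rho_TSDP[S0 _]; rewrite inE. Qed.

Lemma sub_rho_TSD k sh : sh \subset SG VI -> sh \subset rho_TSD k sh.
Proof.
move=> shSG; apply/subsetP => S Ssh; apply/rho_TSDP; split.
  by have := subsetP shSG S Ssh; rewrite inE.
by move=> T x TS _ xS; exists S; rewrite ?Ssh ?TS ?subxx.
Qed.

Lemma rho_TSD_idem k sh : rho_TSD k (rho_TSD k sh) = rho_TSD k sh.
Proof.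
apply/eqP; rewrite eqEsubset sub_rho_TSD ?rho_TSD_subSG // andbT.
apply/subsetP => S /rho_TSDP[S0 covS]; apply/rho_TSDP; split=> // T x TS Tk xS.
have [U /and3P[/rho_TSDP[_ covU] TU US] xU] := covS T x TS Tk xS.
have [V /and3P[Vsh TV VU] xV] := covU T x TU Tk xU.
by exists V; rewrite ?Vsh ?TV ?(subset_trans VU US).
Qed.

Lemma rho_TSD_antimono j k sh : j <= k -> rho_TSD k sh \subset rho_TSD j sh.
Proof.
move=> jk; apply/subsetP => S /rho_TSDP[S0 covS]; apply/rho_TSDP; split=> //.
by move=> T x TS Tj; apply: covS; rewrite ?(leq_trans Tj jk).
Qed.

Lemma mem_TSD k X : (X \in TSD VI k) = (X \subset SG VI) && (rho_TSD k X == X).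
Proof.
apply/imsetP/andP => [[sh _ ->] | [XSG /eqP rhoX]].
  by rewrite rho_TSD_subSG rho_TSD_idem.
by exists X; rewrite ?inE // rhoX.
Qed.

Lemma TSD_mono j k : j <= k -> TSD VI j \subset TSD VI k.
Proof.
move=> jk; apply/subsetP => X; rewrite !mem_TSD => /andP[XSG /eqP rhoX].
rewrite XSG eqEsubset sub_rho_TSD // andbT.
by rewrite -{2}rhoX rho_TSD_antimono.
Qed.

Lemma SG_setD1_TSD S : (SG VI :\ S) \in TSD VI #|S|.
Proof.
rewrite mem_TSD subsetDl eqEsubset sub_rho_TSD ?subsetDl // andbT.
apply/subsetP => S' rhoS'.
rewrite in_setD1 (subsetP (rho_TSD_subSG _ _) _ rhoS') andbT.
apply: contraTneq rhoS' => -> {S'}.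
apply/rho_TSDP => -[/set0Pn[x xS] covS].
have [|U /and3P[] /[!in_setD1] /andP[/eqP + _] TU US xU] :=
  covS (S :\ x) x (subsetDl _ _) _ xS.
  by rewrite (cardsD1 x S) xS.
by apply; apply/eqP; rewrite eqEsubset US -(setD1K xS) subUset sub1set xU.
Qed.

Lemma mem_rho_TSD_SG_setD1 j S : j < #|S| -> S \in rho_TSD j (SG VI :\ S).
Proof.
move=> jS; apply/rho_TSDP; split.
  by rewrite -card_gt0 (leq_ltn_trans _ jS).
move=> T x TS Tj xS; exists (x |: T); last exact: setU11.
rewrite in_setD1 inE subsetUr subUset sub1set xS TS !andbT.
apply/andP; split; last by apply/set0Pn; exists x; apply: setU11.
apply: contraTneq jS => <-; rewrite -leqNgt cardsU1.
by apply: leq_trans Tj; rewrite -add1n leq_add2r leq_b1.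
Qed.

End Closure.

Theorem proposition3p10 (VI : finType) (n : nat) (hn : #|VI| = n)
    (j k : nat) (hj : 1 <= j) (hjk : j < k) (hk : k <= n) :
  TSD VI j \proper TSD VI k.
Proof.
apply/properP; split; first exact/TSD_mono/ltnW.
have /card_gt0P[S] : 0 < #|[set S : {set VI} | #|S| == k]|.
  by rewrite card_draws bin_gt0 hn.
rewrite inE => /eqP cardS.
exists (SG VI :\ S); first by rewrite -cardS SG_setD1_TSD.
have SrhoX : S \in rho_TSD j (SG VI :\ S).
  by apply: mem_rho_TSD_SG_setD1; rewrite cardS.
rewrite mem_TSD; apply/negP => /andP[_ /eqP rhoX].
by move: SrhoX; rewrite rhoX setD11.
Qed.
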